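(* Let $\Gamma$ be a locally-finite simple geodetic graph. If $\rho$ is an embedded circuit in $\Gamma$ of diameter exceeding two which has minimal length among all embedded circuits in $\Gamma$ of diameter exceeding two, then $\rho$ contains a subpath of length three (four consecutive vertices of $\rho$) that is a geodesic in $\Gamma$.
   Context: A graph is geodetic if between any two vertices there is a unique shortest path (geodesic); $d$ is the path metric. A path $u_0,\dots,u_n$ is an embedded circuit of length $n$ if $u_0,\dots,u_{n-1}$ are distinct and $u_0=u_n$. The diameter of an embedded circuit is the maximum distance in $\Gamma$ between two of its vertices. *)

From Stdlib Require Import List Arith.
Import ListNotations.

Section Graph.
Context {V : Type} (adj : V -> V -> Prop).

Definition simple_graph : Prop :=
  (forall x y, adj x y -> adj y x) /\ (forall x, ~ adj x x).

Definition locally_finite : Prop :=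
  forall v, exists l : list V, forall w, adj v w -> In w l.

Fixpoint is_walk (l : list V) : Prop :=
  match l with
  | x :: ((y :: _) as t) => adj x y /\ is_walk t
  | _ => True
  end.

(* l = [u_0; ...; u_n] is a path (walk) from u to v; its length is n = length l - 1 *)
Definition walk_from_to (u v : V) (l : list V) : Prop :=
  exists t, l = u :: t /\ last l u = v /\ is_walk l.

Definition geodesic (u v : V) (l : list V) : Prop :=
  walk_from_to u v l /\
  forall l', walk_from_to u v l' -> length l <= length l'.

Definition dist (u v : V) (n : nat) : Prop :=
  exists l, geodesic u v l /\ length l = S n.

Definition geodetic : Prop :=
  forall u v, exists! l, geodesic u v l.

(* c = [u_0; ...; u_{n-1}] represents the embedded circuit u_0,...,u_{n-1},u_0
   of length n = length c *)
Definition embedded_circuit (c : list V) : Prop :=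
  exists u t, c = u :: t /\ NoDup c /\ is_walk (c ++ [u]).

Definition circuit_diameter_gt (c : list V) (k : nat) : Prop :=
  exists x y n, In x c /\ In y c /\ dist x y n /\ k < n.

(* c contains four cyclically consecutive vertices a,b,c,d whose subpath
   [a;b;c;d] is a geodesic of the graph *)
Definition has_geodesic_subpath3 (c : list V) : Prop :=
  exists l1 l2 a b c' d rest,
    c = l1 ++ l2 /\ l2 ++ l1 = a :: b :: c' :: d :: rest /\
    geodesic a d [a; b; c'; d].

End Graph.

From Stdlib Require Import List Arith Lia Classical.
Import ListNotations.

(* Parametrize the circuit [rho] periodically by [u : nat -> V], with period
   n = |rho|.  If d(x, y) >= 3 for vertices x, y of [rho], every embedded
   circuit through x and y has diameter > 2 and so at least n vertices.  Hence
   x has no chord to the rest of [rho], and no vertex off a short arc of [rho]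
   can close that arc into a circuit through x and y.  Now take such a pair
   x = u s, y = u (s + m) with m <= n/2 and m minimal.  If m > 3, then both
   d(x, u (s + m - 1)) <= 2 and d(u (s + 1), y) <= 2, and the two facts above
   force u (s - 1) ~ u (s + m - 1) and u (s + 1) ~ u (s + m + 1); these chords
   close a hexagon through x and y, shorter than [rho].  So m = 3, and the four
   consecutive vertices u s, ..., u (s + 3) form a geodesic. *)

Section Walks.
Context {V : Type} (adj : V -> V -> Prop).

Lemma is_walk_snoc l x d :
  is_walk adj l -> (l = [] \/ adj (last l d) x) -> is_walk adj (l ++ [x]).
Proof.
  induction l as [|a [|b l] IH]; intros Hw Hx.
  - exact I.
  - destruct Hx as [[=]|Hx]. split; [exact Hx|exact I].
  - destruct Hw as [Hab Hw]. split; [exact Hab|].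
    apply IH; [exact Hw|]. destruct Hx as [[=]|Hx]. right. exact Hx.
Qed.

Lemma is_walk_tail x l : is_walk adj (x :: l) -> is_walk adj l.
Proof. destruct l; simpl; tauto. Qed.

Lemma is_walk_nth l d i :
  is_walk adj l -> S i < length l -> adj (nth i l d) (nth (S i) l d).
Proof.
  revert i. induction l as [|a [|b l] IH]; intros i Hw Hi; simpl in Hi; try lia.
  destruct Hw as [Hab Hw]. destruct i as [|i]; [exact Hab|].
  apply (IH i Hw). simpl. lia.
Qed.

(* Also holds when [q] is not reachable from [p]. *)
Definition dist_ge3 (p q : V) : Prop :=
  forall l, walk_from_to adj p q l -> 4 <= length l.

Lemma dist_ge3_neq p q : dist_ge3 p q -> p <> q.
Proof.
  intros Hfar <-. assert (H : 4 <= length [p]); [|simpl in H; lia].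
  apply Hfar. exists []. repeat split.
Qed.

Lemma not_dist_ge3 p q :
  ~ dist_ge3 p q -> p = q \/ adj p q \/ exists w, adj p w /\ adj w q.
Proof.
  intros Hnear. apply not_all_ex_not in Hnear as [l Hl].
  apply imply_to_and in Hl as [(t & -> & Hlast & Hw) Hlen].
  destruct t as [|a [|b [|c t]]]; simpl in *; subst; try lia.
  - left. reflexivity.
  - right. left. tauto.
  - right. right. exists a. tauto.
Qed.

Lemma dist_gt2_dist_ge3 p q k : dist adj p q k -> 2 < k -> dist_ge3 p q.
Proof.
  intros (l & (_ & Hshortest) & Hlen) Hk l' Hl'.
  specialize (Hshortest l' Hl'). lia.
Qed.

Lemma dist_ge3_dist p q l :
  walk_from_to adj p q l -> dist_ge3 p q -> exists k, dist adj p q k /\ 2 < k.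
Proof.
  intros Hl Hfar.
  destruct (dec_inh_nat_subset_has_unique_least_element
              (fun k => exists l, walk_from_to adj p q l /\ length l = k))
    as (k & ((l0 & Hl0 & <-) & Hleast) & _).
  - intros k. apply classic.
  - exists (length l), l. split; [exact Hl|reflexivity].
  - specialize (Hfar l0 Hl0). exists (length l0 - 1). split; [|lia].
    exists l0. split; [|lia]. split; [exact Hl0|].
    intros l' Hl'. apply Hleast. exists l'. split; [exact Hl'|reflexivity].
Qed.

Lemma dist_ge3_geodesic p q l :
  dist_ge3 p q -> walk_from_to adj p q l -> length l = 4 -> geodesic adj p q l.
Proof.
  intros Hfar Hl Hlen. split; [exact Hl|].
  intros l' Hl'. rewrite Hlen. exact (Hfar l' Hl').
Qed.

Hypothesis adj_sym : forall x y, adj x y -> adj y x.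

Lemma is_walk_rev l : is_walk adj l -> is_walk adj (rev l).
Proof.
  induction l as [|a l IH]; intros Hw; [exact I|]. simpl.
  apply is_walk_snoc with (d := a); [exact (IH (is_walk_tail a l Hw))|].
  destruct l as [|b l]; [left; reflexivity|right].
  destruct Hw as [Hab _]. simpl. rewrite last_last. exact (adj_sym _ _ Hab).
Qed.

Lemma walk_from_to_rev p q l : walk_from_to adj p q l -> walk_from_to adj q p (rev l).
Proof.
  intros (t & -> & Hlast & Hw).
  exists (rev (removelast (p :: t))). split; [|split].
  - rewrite (app_removelast_last p (l := p :: t)) at 1 by discriminate.
    rewrite rev_app_distr, Hlast. reflexivity.
  - simpl. rewrite last_last. reflexivity.
  - exact (is_walk_rev _ Hw).
Qed.

Lemma dist_ge3_sym p q : dist_ge3 p q -> dist_ge3 q p.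
Proof.
  intros Hfar l Hl. rewrite <- length_rev. exact (Hfar _ (walk_from_to_rev _ _ _ Hl)).
Qed.

End Walks.

Section PeriodicCircuit.
Context {V : Type} (adj : V -> V -> Prop).
Variables (n : nat) (u : nat -> V).
Hypothesis n_pos : 0 < n.
Hypothesis u_adj : forall k, adj (u k) (u (S k)).
Hypothesis u_periodic : forall k, u (k + n) = u k.
Hypothesis u_inj_mod : forall a b, u a = u b -> a mod n = b mod n.

Lemma u_adj_eq a b : b = S a -> adj (u a) (u b).
Proof. intros ->. apply u_adj. Qed.

Lemma u_add_mul a q : u (a + q * n) = u a.
Proof.
  induction q as [|q IH]; [now rewrite Nat.add_0_r|].
  rewrite Nat.mul_succ_l, Nat.add_assoc, u_periodic. exact IH.
Qed.

Lemma u_mod_add k j : u (k mod n + j) = u (k + j).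
Proof.
  rewrite (Nat.div_mod_eq k n) at 2.
  replace (n * (k / n) + k mod n + j) with (k mod n + j + k / n * n) by lia.
  symmetry. apply u_add_mul.
Qed.

Lemma u_inj_window s a b :
  s <= a < s + n -> s <= b < s + n -> u a = u b -> a = b.
Proof.
  intros Ha Hb Hab. apply u_inj_mod in Hab.
  pose proof (Nat.div_mod_eq a n). pose proof (Nat.div_mod_eq b n).
  destruct (Nat.lt_trichotomy (a / n) (b / n)) as [Hq|[Hq|Hq]]; nia.
Qed.

Definition arc a L := map u (seq a (S L)).

Lemma length_arc a L : length (arc a L) = S L.
Proof. unfold arc. now rewrite length_map, length_seq. Qed.

Lemma in_arc a L k : a <= k <= a + L -> In (u k) (arc a L).
Proof. intros Hk. apply in_map, in_seq. lia. Qed.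

Lemma in_arc_inv a L w : In w (arc a L) -> exists k, a <= k <= a + L /\ w = u k.
Proof.
  intros (k & <- & Hk)%in_map_iff. apply in_seq in Hk.
  exists k. split; [lia|reflexivity].
Qed.

Lemma last_arc a L d : last (arc a L) d = u (a + L).
Proof. unfold arc. rewrite seq_S, map_app. simpl. apply last_last. Qed.

Lemma arc_is_walk a L : is_walk adj (arc a L).
Proof.
  revert a. induction L as [|L IH]; intros a; [exact I|].
  change (is_walk adj (u a :: arc (S a) L)). split; [apply u_adj|apply IH].
Qed.

Lemma arc_walk a L : walk_from_to adj (u a) (u (a + L)) (arc a L).
Proof.
  exists (map u (seq (S a) L)). split; [reflexivity|].
  split; [apply last_arc|apply arc_is_walk].
Qed.

Lemma arc_NoDup a L : L < n -> NoDup (arc a L).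
Proof.
  intros HL. apply NoDup_map_NoDup_ForallPairs; [|apply seq_NoDup].
  intros k k' Hk Hk'. apply in_seq in Hk, Hk'. apply (u_inj_window a); lia.
Qed.

Lemma arc_chord_circuit a L :
  L < n -> adj (u (a + L)) (u a) -> embedded_circuit adj (arc a L).
Proof.
  intros HL Hchord. exists (u a), (map u (seq (S a) L)).
  split; [reflexivity|]. split; [now apply arc_NoDup|].
  apply is_walk_snoc with (d := u a); [apply arc_is_walk|].
  right. now rewrite last_arc.
Qed.

Lemma arc_detour_circuit a L w :
  L < n -> ~ In w (arc a L) -> adj w (u a) -> adj (u (a + L)) w ->
  embedded_circuit adj (w :: arc a L).
Proof.
  intros HL Hout Hwa Hw. exists w, (arc a L).
  split; [reflexivity|]. split; [constructor; [exact Hout|now apply arc_NoDup]|].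
  apply is_walk_snoc with (d := w).
  - change (adj w (u a) /\ is_walk adj (arc a L)). split; [exact Hwa|apply arc_is_walk].
  - right. change (adj (last (arc a L) w) w). now rewrite last_arc.
Qed.

Lemma dist_ge3_arc a L : dist_ge3 adj (u a) (u (a + L)) -> 3 <= L.
Proof. intros Hfar. specialize (Hfar _ (arc_walk a L)). rewrite length_arc in Hfar. lia. Qed.

Section MinimalCircuit.
Hypothesis adj_sym : forall x y, adj x y -> adj y x.
Hypothesis adj_irrefl : forall x, ~ adj x x.
Hypothesis n_minimal : forall sigma, embedded_circuit adj sigma ->
  circuit_diameter_gt adj sigma 2 -> n <= length sigma.

Lemma far_pair_circuit_long i k sigma :
  dist_ge3 adj (u i) (u (i + k)) -> embedded_circuit adj sigma ->
  In (u i) sigma -> In (u (i + k)) sigma -> n <= length sigma.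
Proof.
  intros Hfar Hsigma Hx Hy. apply n_minimal; [exact Hsigma|].
  destruct (dist_ge3_dist adj _ _ _ (arc_walk i k) Hfar) as (d & Hd & Hd2).
  now exists (u i), (u (i + k)), d.
Qed.

(* Each of the two arcs cut off by the chord, closed by the chord, is a
   circuit through [u i] shorter than the circuit [u]; one of them also
   contains [u (i + k)]. *)
Lemma far_pair_no_chord i k j :
  k < n -> dist_ge3 adj (u i) (u (i + k)) ->
  0 < j < n -> adj (u i) (u (i + j)) -> j = 1 \/ j = n - 1.
Proof.
  intros Hk Hfar Hj Hchord.
  destruct (Nat.eq_dec j 1) as [|Hj1]; [now left|].
  destruct (Nat.eq_dec j (n - 1)) as [|Hjn]; [now right|]. exfalso.
  assert (Hk0 : k <> 0).
  { intros ->. rewrite Nat.add_0_r in Hfar. exact (dist_ge3_neq adj _ _ Hfar eq_refl). }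
  destruct (le_lt_dec k j) as [Hkj|Hjk].
  - enough (n <= length (arc i j)) by (rewrite length_arc in *; lia).
    apply (far_pair_circuit_long i k); [exact Hfar| | apply in_arc; lia | apply in_arc; lia].
    apply arc_chord_circuit; [lia|exact (adj_sym _ _ Hchord)].
  - assert (Hend : u (i + j + (n - j)) = u i).
    { replace (i + j + (n - j)) with (i + n) by lia. apply u_periodic. }
    enough (n <= length (arc (i + j) (n - j))) by (rewrite length_arc in *; lia).
    apply (far_pair_circuit_long i k); [exact Hfar| | | apply in_arc; lia].
    + apply arc_chord_circuit; [lia|now rewrite Hend].
    + rewrite <- Hend. apply in_arc. lia.
Qed.

Lemma far_pair_pred_adj s m :
  4 <= m < n -> dist_ge3 adj (u s) (u (s + m)) ->
  ~ dist_ge3 adj (u s) (u (s + m - 1)) -> adj (u (s + n - 1)) (u (s + m - 1)).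
Proof.
  intros Hm Hfar Hnear.
  assert (Hend : u (s + m - 1 + (n - m + 1)) = u s).
  { replace (s + m - 1 + (n - m + 1)) with (s + n) by lia. apply u_periodic. }
  destruct (not_dist_ge3 adj _ _ Hnear) as [Heq | [Hadj | (w & Hxw & Hwz)]].
  - apply (u_inj_window s) in Heq; lia.
  - replace (s + m - 1) with (s + (m - 1)) in Hadj by lia.
    pose proof (far_pair_no_chord s m (m - 1) ltac:(lia) Hfar ltac:(lia) Hadj). lia.
  - destruct (classic (In w (arc (s + m - 1) (n - m + 1)))) as [Hin | Hout].
    + apply in_arc_inv in Hin as (k & Hk & ->).
      destruct (Nat.eq_dec k (s + n)) as [->|Hkn].
      { rewrite u_periodic in Hxw. now destruct (adj_irrefl _ Hxw). }
      replace k with (s + (k - s)) in Hxw, Hwz by lia.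
      pose proof (far_pair_no_chord s m (k - s) ltac:(lia) Hfar ltac:(lia) Hxw).
      replace (s + n - 1) with (s + (k - s)) by lia. exact Hwz.
    + exfalso.
      enough (n <= S (length (arc (s + m - 1) (n - m + 1)))) by (rewrite length_arc in *; lia).
      apply (far_pair_circuit_long s m (w :: arc (s + m - 1) (n - m + 1))); [exact Hfar| | |].
      * apply arc_detour_circuit; [lia|exact Hout|exact Hwz|now rewrite Hend].
      * right. rewrite <- Hend. apply in_arc. lia.
      * right. apply in_arc. lia.
Qed.

Lemma far_pair_succ_adj s m :
  4 <= m < n -> dist_ge3 adj (u s) (u (s + m)) ->
  ~ dist_ge3 adj (u (s + 1)) (u (s + m)) -> adj (u (s + 1)) (u (s + m + 1)).
Proof.
  intros Hm Hfar Hnear.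
  assert (Hx : u (s + m + (n - m)) = u s).
  { replace (s + m + (n - m)) with (s + n) by lia. apply u_periodic. }
  assert (Hfar' : dist_ge3 adj (u (s + m)) (u (s + m + (n - m)))).
  { rewrite Hx. now apply dist_ge3_sym. }
  assert (Hend : u (s + m + (n - m + 1)) = u (s + 1)).
  { replace (s + m + (n - m + 1)) with (s + 1 + n) by lia. apply u_periodic. }
  destruct (not_dist_ge3 adj _ _ Hnear) as [Heq | [Hadj | (w & Hxw & Hwy)]].
  - apply (u_inj_window s) in Heq; lia.
  - rewrite <- Hend in Hadj.
    pose proof (far_pair_no_chord (s + m) (n - m) (n - m + 1)
                  ltac:(lia) Hfar' ltac:(lia) (adj_sym _ _ Hadj)). lia.
  - destruct (classic (In w (arc (s + m) (n - m + 1)))) as [Hin | Hout].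
    + apply in_arc_inv in Hin as (k & Hk & ->).
      destruct (Nat.eq_dec k (s + m)) as [->|Hkm].
      { now destruct (adj_irrefl _ Hwy). }
      replace k with (s + m + (k - s - m)) in Hxw, Hwy by lia.
      pose proof (far_pair_no_chord (s + m) (n - m) (k - s - m)
                    ltac:(lia) Hfar' ltac:(lia) (adj_sym _ _ Hwy)).
      replace (s + m + 1) with (s + m + (k - s - m)) by lia. exact Hxw.
    + exfalso.
      enough (n <= S (length (arc (s + m) (n - m + 1)))) by (rewrite length_arc in *; lia).
      apply (far_pair_circuit_long s m (w :: arc (s + m) (n - m + 1))); [exact Hfar| | |].
      * apply arc_detour_circuit; [lia|exact Hout|exact Hwy|now rewrite Hend].
      * right. rewrite <- Hx. apply in_arc. lia.
      * right. apply in_arc. lia.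
Qed.

Lemma far_pair_no_hexagon s m :
  4 <= m -> 2 * m <= n -> dist_ge3 adj (u s) (u (s + m)) ->
  adj (u (s + n - 1)) (u (s + m - 1)) -> adj (u (s + 1)) (u (s + m + 1)) -> False.
Proof.
  intros Hm Hn Hfar Hpred Hsucc.
  set (hexagon := map u [s; s + 1; s + m + 1; s + m; s + m - 1; s + n - 1]).
  enough (n <= length hexagon) by (simpl in *; lia).
  apply (far_pair_circuit_long s m); [exact Hfar| | simpl; tauto | simpl; tauto].
  exists (u s), (map u [s + 1; s + m + 1; s + m; s + m - 1; s + n - 1]).
  split; [reflexivity|split].
  - apply NoDup_map_NoDup_ForallPairs.
    + intros a b Ha Hb. apply (u_inj_window s); simpl in Ha, Hb; lia.
    + repeat constructor; simpl; lia.
  - simpl. repeat split.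
    + apply u_adj_eq. lia.
    + exact Hsucc.
    + apply adj_sym, u_adj_eq. lia.
    + apply adj_sym, u_adj_eq. lia.
    + exact (adj_sym _ _ Hpred).
    + rewrite <- (u_periodic s). apply u_adj_eq. lia.
Qed.

Lemma far_pair_shrink s m :
  4 <= m -> 2 * m <= n -> dist_ge3 adj (u s) (u (s + m)) ->
  dist_ge3 adj (u s) (u (s + (m - 1))) \/
  dist_ge3 adj (u (s + 1)) (u (s + 1 + (m - 1))).
Proof.
  intros Hm Hn Hfar.
  replace (s + (m - 1)) with (s + m - 1) by lia.
  replace (s + 1 + (m - 1)) with (s + m) by lia.
  apply NNPP. intros [Hpred Hsucc]%not_or_and.
  apply (far_pair_no_hexagon s m Hm Hn Hfar).
  - apply far_pair_pred_adj; [lia|exact Hfar|exact Hpred].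
  - apply far_pair_succ_adj; [lia|exact Hfar|exact Hsucc].
Qed.

Lemma far_pair_consecutive m s :
  dist_ge3 adj (u s) (u (s + m)) ->
  exists i, i < n /\ 3 < n /\ dist_ge3 adj (u i) (u (i + 3)).
Proof.
  revert s. induction m as [m IH] using lt_wf_ind. intros s Hfar.
  pose proof (dist_ge3_arc s m Hfar) as Hm.
  destruct (le_lt_dec n m) as [Hnm|Hmn].
  { apply (IH (m - n) ltac:(lia) s).
    rewrite <- (u_periodic (s + (m - n))). now replace (s + (m - n) + n) with (s + m) by lia. }
  destruct (Nat.eq_dec m 3) as [->|Hm3].
  { exists (s mod n). split; [now apply Nat.mod_upper_bound; lia|split; [lia|]].
    pose proof (u_mod_add s 0) as Hs. rewrite !Nat.add_0_r in Hs.
    now rewrite Hs, u_mod_add. }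
  destruct (lt_dec n (2 * m)) as [Hlong|Hshort].
  { apply (IH (n - m) ltac:(lia) (s + m)).
    replace (s + m + (n - m)) with (s + n) by lia. rewrite u_periodic.
    now apply dist_ge3_sym. }
  destruct (far_pair_shrink s m ltac:(lia) ltac:(lia) Hfar) as [Hfar'|Hfar'];
    exact (IH (m - 1) ltac:(lia) _ Hfar').
Qed.

End MinimalCircuit.
End PeriodicCircuit.

Lemma rotate_nth_mod {A : Type} (l : list A) d r :
  r < length l ->
  skipn r l ++ firstn r l = map (fun k => nth (k mod length l) l d) (seq r (length l)).
Proof.
  intros Hr. set (n := length l) in *.
  apply nth_ext with (d := d) (d' := d).
  - rewrite length_app, length_skipn, length_firstn, length_map, length_seq. lia.
  - intros j Hj. rewrite length_app, length_skipn, length_firstn in Hj.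
    set (f := fun k => nth (k mod n) l d).
    assert (Hf : nth j (map f (seq r n)) d = f (r + j)).
    { rewrite (nth_indep _ d (f 0)) by (rewrite length_map, length_seq; lia).
      rewrite map_nth, seq_nth by lia. reflexivity. }
    rewrite Hf. unfold f.
    destruct (lt_dec j (n - r)).
    + rewrite app_nth1 by (rewrite length_skipn; lia).
      rewrite nth_skipn, Nat.mod_small by lia. reflexivity.
    + rewrite app_nth2, nth_firstn, length_skipn by (rewrite length_skipn; lia). fold n.
      destruct (Nat.ltb_spec (j - (n - r)) r); [|lia].
      replace (r + j) with (j - (n - r) + 1 * n) by lia.
      rewrite Nat.Div0.mod_add, Nat.mod_small by lia. reflexivity.
Qed.

Section ListCircuit.
Context {V : Type} (adj : V -> V -> Prop) (x0 : V) (t : list V).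

Let n := length (x0 :: t).
Let u k := nth (k mod n) (x0 :: t) x0.

Lemma nth_mod_adj : is_walk adj ((x0 :: t) ++ [x0]) -> forall k, adj (u k) (u (S k)).
Proof.
  intros Hw k. unfold u.
  assert (Hk : k mod n < n) by (apply Nat.mod_upper_bound; unfold n; simpl; lia).
  pose proof (is_walk_nth adj ((x0 :: t) ++ [x0]) x0 (k mod n) Hw) as Hstep.
  rewrite length_app, app_nth1 in Hstep by exact Hk. fold n in Hstep.
  change (length [x0]) with 1 in Hstep.
  replace (S k mod n) with (S (k mod n) mod n).
  2:{ rewrite <- (Nat.add_1_r k), <- (Nat.add_1_r (k mod n)). apply Nat.Div0.add_mod_idemp_l. }
  destruct (Nat.eq_dec (S (k mod n)) n) as [Hwrap|Hin].
  - rewrite Hwrap, Nat.Div0.mod_same.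
    rewrite app_nth2, Hwrap, Nat.sub_diag in Hstep by lia. exact (Hstep ltac:(lia)).
  - rewrite (Nat.mod_small (S (k mod n))) by lia.
    rewrite app_nth1 in Hstep by (fold n; lia). exact (Hstep ltac:(lia)).
Qed.

Lemma nth_mod_periodic k : u (k + n) = u k.
Proof.
  unfold u. replace (k + n) with (k + 1 * n) by lia. now rewrite Nat.Div0.mod_add.
Qed.

Lemma nth_mod_inj : NoDup (x0 :: t) -> forall a b, u a = u b -> a mod n = b mod n.
Proof.
  intros Hnodup a b Hab.
  apply (proj1 (NoDup_nth (x0 :: t) x0) Hnodup);
    [apply Nat.mod_upper_bound; unfold n; simpl; lia ..|exact Hab].
Qed.

Lemma has_geodesic_subpath3_nth_mod i :
  i < n -> 3 < n -> is_walk adj ((x0 :: t) ++ [x0]) ->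
  dist_ge3 adj (u i) (u (i + 3)) -> has_geodesic_subpath3 adj (x0 :: t).
Proof.
  intros Hi Hn Hw Hfar.
  exists (firstn i (x0 :: t)), (skipn i (x0 :: t)),
    (u i), (u (S i)), (u (S (S i))), (u (S (S (S i)))),
    (map u (seq (S (S (S (S i)))) (n - 4))).
  split; [symmetry; apply firstn_skipn|split].
  - rewrite (rotate_nth_mod (x0 :: t) x0 i Hi). fold n.
    now replace (seq i n) with (seq i (S (S (S (S (n - 4)))))) by (f_equal; lia).
  - apply dist_ge3_geodesic; [now replace (S (S (S i))) with (i + 3) by lia| |reflexivity].
    exists [u (S i); u (S (S i)); u (S (S (S i)))].
    repeat split; apply (nth_mod_adj Hw).
Qed.

End ListCircuit.

Theorem lemma6 (V : Type) (adj : V -> V -> Prop) :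
  simple_graph adj -> locally_finite adj -> geodetic adj ->
  forall rho : list V,
    embedded_circuit adj rho ->
    circuit_diameter_gt adj rho 2 ->
    (forall sigma : list V,
        embedded_circuit adj sigma -> circuit_diameter_gt adj sigma 2 ->
        length rho <= length sigma) ->
    has_geodesic_subpath3 adj rho.
Proof.
  intros [adj_sym adj_irrefl] _ _ rho (x0 & t & -> & Hnodup & Hwalk)
    (x & y & k & Hx & Hy & Hxy & Hk) Hmin.
  set (u := fun k => nth (k mod length (x0 :: t)) (x0 :: t) x0).
  apply (In_nth _ x x0) in Hx as (a & Ha & <-).
  apply (In_nth _ y x0) in Hy as (b & Hb & <-).
  assert (Hfar : dist_ge3 adj (u a) (u (a + (b + length (x0 :: t) - a)))).
  { replace (a + (b + length (x0 :: t) - a)) with (b + length (x0 :: t)) by lia.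
    unfold u. rewrite nth_mod_periodic, !Nat.mod_small by lia.
    exact (dist_gt2_dist_ge3 adj _ _ _ Hxy Hk). }
  destruct (far_pair_consecutive adj (length (x0 :: t)) u ltac:(simpl; lia)
              (nth_mod_adj adj x0 t Hwalk) (nth_mod_periodic x0 t) (nth_mod_inj x0 t Hnodup)
              adj_sym adj_irrefl Hmin _ _ Hfar) as (i & Hi & Hn & Hfar3).
  exact (has_geodesic_subpath3_nth_mod adj x0 t i Hi Hn Hwalk Hfar3).
Qed.
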